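(* For every integer $n \ge 0$, every point $z \in \overline{D}(-\tfrac12 + 2^{2n}, 2^{-(2n+1)})$ has unbounded forward orbit under $f_1(z) = 3z^3 - \tfrac92 z^2 + 1$.
   Context: Let $|\cdot|$ denote the $2$-adic absolute value on $\mathbb{C}_2$, normalized by $|2| = 1/2$. The notation $\overline{D}(a,\delta)$ denotes the closed disk $\{z \in \mathbb{C}_2 : |z-a| \le \delta\}$. Here $f_1$ is the member with $t=1$ of the family $f_t(z) = -\tfrac32 t(-2z^3+3z^2)+1$. *)

From mathcomp Require Import all_boot all_order all_algebra.
From mathcomp Require Import reals.
Set Implicit Arguments. Unset Strict Implicit. Unset Printing Implicit Defensive.
Import Order.TTheory GRing.Theory Num.Theory.
Local Open Scope ring_scope.

(* [abs] is a non-archimedean absolute value on K normalized by |2| = 1/2,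
   i.e. it restricts to the 2-adic absolute value on Q. *)
Definition two_adic_abs (K : fieldType) (R : realType) (abs : K -> R) : Prop :=
  [/\ forall x, 0 <= abs x,
      forall x, abs x = 0 <-> x = 0,
      forall x y, abs (x * y) = abs x * abs y,
      forall x y, abs (x + y) <= Num.max (abs x) (abs y)
    & abs 2%:R = 2%:R^-1].

Definition abs_complete (K : fieldType) (R : realType) (abs : K -> R) : Prop :=
  forall u : nat -> K,
    (forall e : R, 0 < e -> exists N : nat, forall m n : nat,
        (N <= m)%N -> (N <= n)%N -> abs (u m - u n) < e) ->
    exists l : K, forall e : R, 0 < e -> exists N : nat, forall n : nat,
        (N <= n)%N -> abs (u n - l) < e.

Definition f_t (K : fieldType) (t z : K) : K :=
  - (3%:R / 2%:R) * t * (- 2%:R * z ^+ 3 + 3%:R * z ^+ 2) + 1.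

Definition f1 (K : fieldType) (z : K) : K := f_t 1 z.

Definition closed_disk (K : fieldType) (R : realType) (abs : K -> R)
  (a : K) (delta : R) : K -> Prop := fun z => abs (z - a) <= delta.

Definition unbounded_orbit (K : fieldType) (R : realType) (abs : K -> R)
  (f : K -> K) (z : K) : Prop :=
  ~ (exists M : R, forall k : nat, abs (iter k f z) <= M).

(* In the coordinate w = z + 1/2 the map f1 becomes
   g(w) = 3 w^3 - 9 w^2 + (27/4) w, whose linear coefficient has absolute
   value 4.  For |w| small the linear term dominates, so g maps the disk
   |w - 4^(n+1)| <= |4^(n+1)|/2 into |w - 4^n| <= |4^n|/2; after n steps the
   orbit lies in |w - 1| <= 1/2, where |g w| = 4.  From |w| >= 4 on the cubic
   term dominates, |g w| = |w|^3 >= |w| + 4, so the orbit escapes. *)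

From mathcomp Require Import all_boot all_order all_algebra.
From mathcomp Require Import reals.
From mathcomp Require Import ring lra.
Import Order.TTheory GRing.Theory Num.Theory.
Set Implicit Arguments. Unset Strict Implicit. Unset Printing Implicit Defensive.
Local Open Scope ring_scope.

Section TwoAdicAbs.
Variables (R : realType) (K : fieldType) (abs : K -> R).
Hypothesis habs : two_adic_abs abs.

Lemma abs_ge0 x : 0 <= abs x.
Proof. by case: habs. Qed.

Lemma absM x y : abs (x * y) = abs x * abs y.
Proof. by case: habs. Qed.

Lemma abs_ultra x y : abs (x + y) <= Num.max (abs x) (abs y).
Proof. by case: habs. Qed.

Lemma abs0 : abs 0 = 0.
Proof. by case: habs => _ h _ _ _; apply/h. Qed.

Lemma abs_neq0 x : x != 0 -> abs x != 0.
Proof. by case: habs => _ h _ _ _ nz; apply: contra nz => /eqP/h ->. Qed.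

Lemma abs1 : abs 1 = 1.
Proof.
have n0 := abs_neq0 (oner_neq0 K).
by apply: (mulfI n0); rewrite -absM !mulr1.
Qed.

Lemma absN x : abs (- x) = abs x.
Proof.
have sq1 : abs (-1) * abs (-1) = 1 by rewrite -absM mulrNN mulr1 abs1.
have absN1 : abs (-1) = 1.
  by have := abs_ge0 (-1); nra.
by rewrite -mulN1r absM absN1 mul1r.
Qed.

Lemma absX x k : abs (x ^+ k) = abs x ^+ k.
Proof.
elim: k => [|k IH]; first by rewrite !expr0 abs1.
by rewrite !exprS absM IH.
Qed.

Lemma absV x : abs (x^-1) = (abs x)^-1.
Proof.
have [->|nz] := eqVneq x 0; first by rewrite invr0 abs0 invr0.
apply: (mulfI (abs_neq0 nz)).
by rewrite -absM !mulfV ?abs1 ?abs_neq0.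
Qed.

Lemma abs_add_le x y e : abs x <= e -> abs y <= e -> abs (x + y) <= e.
Proof. by move=> hx hy; apply: le_trans (abs_ultra x y) _; rewrite ge_max hx. Qed.

Lemma abs_add_eql x y : abs y < abs x -> abs (x + y) = abs x.
Proof.
move=> hyx; apply/eqP; rewrite eq_le.
rewrite (abs_add_le (lexx _) (ltW hyx)) /=.
have := abs_ultra (x + y) (- y); rewrite addrK absN le_max.
by case/orP => // /(lt_le_trans hyx); rewrite ltxx.
Qed.

Lemma abs_nat_le1 k : abs k%:R <= 1.
Proof.
elim: k => [|k IH]; first by rewrite abs0.
by rewrite -addn1 natrD abs_add_le ?abs1.
Qed.

Lemma abs2 : abs 2%:R = 2^-1.
Proof. by case: habs. Qed.

Lemma two_neq0 : (2%:R : K) != 0.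
Proof.
apply/eqP => two0; move: abs2; rewrite two0 abs0 => /esym/eqP.
by rewrite invr_eq0 pnatr_eq0.
Qed.

Lemma abs_odd m : abs (m.*2.+1)%:R = 1.
Proof.
rewrite -addn1 -muln2 natrD natrM addrC abs_add_eql ?abs1 //.
rewrite absM abs2.
have := abs_nat_le1 m; lra.
Qed.

Lemma abs_pow2 k : abs (2%:R ^+ k) = (2%:R ^+ k)^-1.
Proof. by rewrite absX abs2 exprVn. Qed.

Lemma abs_half : abs 2%:R^-1 = 2%:R.
Proof. by rewrite absV abs2 invrK. Qed.

End TwoAdicAbs.

Definition f1_conj (K : fieldType) (w : K) : K :=
  3%:R * w ^+ 3 - 9%:R * w ^+ 2 + 27%:R / 4%:R * w.

Lemma four_neq0 (K : fieldType) : (2%:R : K) != 0 -> (4%:R : K) != 0.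
Proof. by move=> two_nz; rewrite -[4%N]/(2 * 2)%N natrM mulf_neq0. Qed.

Lemma f1_conjE (K : fieldType) (z : K) :
  (2%:R : K) != 0 -> f1 z + 2%:R^-1 = f1_conj (z + 2%:R^-1).
Proof.
move=> two_nz; rewrite /f1 /f_t /f1_conj; field.
by rewrite two_nz four_neq0.
Qed.

Lemma iter_f1_conjE (K : fieldType) k (z : K) :
  (2%:R : K) != 0 -> iter k (@f1 K) z + 2%:R^-1 = iter k (@f1_conj K) (z + 2%:R^-1).
Proof. by move=> two_nz; elim: k => //= k <-; rewrite f1_conjE. Qed.

Lemma iter_escape_unbounded (T : Type) (R : realType) (h : T -> R) (f : T -> T)
    (a c : R) (x : T) :
  0 < c -> (forall y, a <= h y -> h y + c <= h (f y)) -> a <= h x ->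
  ~ exists M, forall k, h (iter k f x) <= M.
Proof.
move=> c_gt0 hf hx [M hM].
have grow k : h x + c * k%:R <= h (iter k f x).
  elim: k => [|k IH]; first by rewrite mulr0 addr0.
  have k_ge0 : 0 <= c * k%:R by rewrite mulr_ge0 ?ler0n ?(ltW c_gt0).
  rewrite iterS -[k.+1]addn1 natrD mulrDr mulr1 addrA.
  have ha : a <= h (iter k f x) by lra.
  by have := hf _ ha; lra.
have d_ge0 : 0 <= `|M - h x| / c by rewrite divr_ge0 ?(ltW c_gt0).
have := archi_boundP d_ge0; set k := Num.Def.archi_bound _.
rewrite ltr_pdivrMr // => hk.
have := grow k; have := hM k; have := ler_norm (M - h x); lra.
Qed.

Section F1Conj.
Variables (R : realType) (K : fieldType) (abs : K -> R).
Hypothesis habs : two_adic_abs abs.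
Local Notation g := (@f1_conj K).

Lemma abs_four : abs (4%:R : K) = 4%:R^-1.
Proof. by rewrite -[4%N]/(2 ^ 2)%N natrX (abs_pow2 habs) -natrX. Qed.

Lemma abs_f1_conj_coef : abs (27%:R / 4%:R : K) = 4%:R.
Proof. by rewrite (absM habs) (absV habs) abs_four invrK (abs_odd habs 13) mul1r. Qed.

Lemma f1_conj_contract q w :
  abs q <= 1 -> abs (w - 4%:R * q) <= abs q / 8%:R ->
  abs (g w - q) <= abs q / 2%:R.
Proof.
move=> q_le1 hw.
(* Expanding around 4q, the linear term leaves 27q - q = 26q, of absolute value |q|/2. *)
have -> : g w - q = 27%:R / 4%:R * (w - 4%:R * q) + 2%:R * (13%:R * q)
                    - 9%:R * w ^+ 2 + 3%:R * w ^+ 3.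
  by rewrite /f1_conj; field; rewrite four_neq0 ?(two_neq0 habs).
have q_ge0 := abs_ge0 habs q; have w_ge0 := abs_ge0 habs w.
have abs_w : abs w <= abs q / 4%:R.
  rewrite -[w](subrK (4%:R * q)) (abs_add_le habs) //; first lra.
  by rewrite (absM habs) abs_four; lra.
have abs3 : abs (3%:R : K) = 1 := abs_odd habs 1.
have abs9 : abs (9%:R : K) = 1 := abs_odd habs 4.
have abs13 : abs (13%:R : K) = 1 := abs_odd habs 6.
apply: (abs_add_le habs); [apply: (abs_add_le habs); [apply: (abs_add_le habs)|]|];
  rewrite ?(absN habs) !(absM habs) ?(absX habs).
- by rewrite (absV habs) abs_four invrK (abs_odd habs 13); lra.
- by rewrite (abs2 habs) abs13; lra.
- by rewrite abs9; nra.
- by rewrite abs3; nra.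
Qed.

Lemma f1_conj_unit_disk w : abs (w - 1) <= 2%:R^-1 -> abs (g w) = 4%:R.
Proof.
move=> hw.
have abs_w : abs w = 1.
  by rewrite -[w](subrK 1) addrC (abs_add_eql habs) (abs1 habs) //; lra.
rewrite /f1_conj addrC (abs_add_eql habs) (absM habs) abs_f1_conj_coef abs_w ?mulr1 //.
apply: (@le_lt_trans _ _ 1); last lra.
by apply: (abs_add_le habs);
  rewrite ?(absN habs) (absM habs) (absX habs) abs_w expr1n mulr1 abs_nat_le1.
Qed.

Lemma f1_conj_escape w : 4%:R <= abs w -> abs w + 4%:R <= abs (g w).
Proof.
move=> hw; set a := abs w in hw *.
have a2 : 16%:R <= a ^+ 2 by rewrite expr2; nra.
have a3 : 16%:R * a <= a ^+ 3 by rewrite exprSr; nra.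
have abs3 : abs (3%:R : K) = 1 := abs_odd habs 1.
have abs9 : abs (9%:R : K) = 1 := abs_odd habs 4.
rewrite /f1_conj -addrA (abs_add_eql habs) (absM habs) (absX habs) abs3 mul1r -/a; first lra.
apply: (@le_lt_trans _ _ (a ^+ 3 / 4%:R)); last lra.
apply: (abs_add_le habs); rewrite ?(absN habs) (absM habs) ?(absX habs) -/a.
- by rewrite abs9 mul1r exprSr; nra.
- by rewrite abs_f1_conj_coef; nra.
Qed.

Lemma iter_f1_conj_disk n w :
  abs (w - 2%:R ^+ (2 * n)) <= abs (2%:R ^+ (2 * n) : K) / 2%:R ->
  abs (iter n g w - 1) <= 2%:R^-1.
Proof.
elim: n w => [|n IH] w hw; first by move: hw; rewrite muln0 expr0 (abs1 habs) div1r.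
rewrite iterSr; apply: IH; apply: f1_conj_contract.
  rewrite (absX habs) (abs2 habs).
  by apply: exprn_ile1; rewrite ?invr_ge0 ?invf_le1 ?ler1n.
move: hw; rewrite mulnS exprD -natrX (absM habs) abs_four.
by have := abs_ge0 habs (2%:R ^+ (2 * n)); lra.
Qed.

End F1Conj.

Theorem mainTheorem8 (R : realType) (K : closedFieldType) (abs : K -> R)
  (habs : two_adic_abs abs) (hcomplete : abs_complete abs) (n : nat) (z : K) :
  closed_disk abs (- (2%:R^-1) + 2%:R ^+ (2 * n)) ((2%:R ^+ (2 * n).+1)^-1) z ->
  unbounded_orbit abs (@f1 K) z.
Proof.
rewrite /closed_disk => hz [M hM].
have two_nz := two_neq0 habs.
set w := z + 2%:R^-1.
have hw : abs (w - 2%:R ^+ (2 * n)) <= abs (2%:R ^+ (2 * n) : K) / 2%:R.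
  have -> : w - 2%:R ^+ (2 * n) = z - (- 2%:R^-1 + 2%:R ^+ (2 * n)) by rewrite /w; ring.
  by rewrite (abs_pow2 habs) -invfM -exprSr.
have escaped : 4%:R <= abs (iter n.+1 (@f1_conj K) w).
  by rewrite iterS (f1_conj_unit_disk habs) // (iter_f1_conj_disk habs).
apply: (iter_escape_unbounded (ltr0Sn _ 3) (f1_conj_escape habs) escaped).
exists (Num.max M 2%:R) => k.
rewrite -iterD -(iter_f1_conjE _ _ two_nz) (abs_add_le habs) //.
  by rewrite le_max hM.
by rewrite (abs_half habs) le_max lexx orbT.
Qed.
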